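(* For every $3\times 3$ bimatrix game $(A,B)$: if $(A,B)$ has a unique Nash equilibrium and it lies in the interior of $\Sigma_A\times\Sigma_B$, then the transition diagram of $(A,B)$ has no dominated row or column, i.e. for all $\{i,i',i''\}=\{j,j',j''\}=\{1,2,3\}$, $(i,j)\to(i',j)$ and $(i,j')\to(i',j')$ imply $(i',j'')\to(i,j'')$, and $(i,j)\to(i,j')$ and $(i',j)\to(i',j')$ imply $(i'',j')\to(i'',j)$.
   Context: $\Sigma_A$ is the set of probability row vectors and $\Sigma_B$ the set of probability column vectors in $\mathbb{R}^3$. For $A=(a_{ij})$, $B=(b_{ij})\in\mathbb{R}^{3\times3}$, $\mathrm{BR}_A(q)=\operatorname{argmax}_{p\in\Sigma_A} pAq$, $\mathrm{BR}_B(p)=\operatorname{argmax}_{q\in\Sigma_B} pBq$; a Nash equilibrium is $(\bar p,\bar q)$ with $\bar p\in\mathrm{BR}_A(\bar q)$, $\bar q\in \mathrm{BR}_B(\bar p)$. The transition relation on cells $(i,j)$, $i,j\in\{1,2,3\}$, is: for $i\neq i'$, $(i,j)\to(i',j)$ iff $a_{i'j}\ge a_{ij}$; for $j\neq j'$, $(i,j)\to(i,j')$ iff $b_{ij'}\ge b_{ij}$. *)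

From HB Require Import structures.
From mathcomp Require Import all_boot all_order all_algebra.
Set Implicit Arguments. Unset Strict Implicit. Unset Printing Implicit Defensive.
Import Order.TTheory GRing.Theory Num.Theory.
Local Open Scope ring_scope.

Section Game.
Variable R : realFieldType.

Definition SigmaA (p : 'rV[R]_3) : Prop :=
  (forall j, 0 <= p 0 j) /\ \sum_(j < 3) p 0 j = 1.
Definition SigmaB (q : 'cV[R]_3) : Prop :=
  (forall i, 0 <= q i 0) /\ \sum_(i < 3) q i 0 = 1.

Definition payoff (p : 'rV[R]_3) (M : 'M[R]_3) (q : 'cV[R]_3) : R :=
  (p *m M *m q) 0 0.

Definition BR_A (A : 'M[R]_3) (q : 'cV[R]_3) (p : 'rV[R]_3) : Prop :=
  SigmaA p /\ forall p', SigmaA p' -> payoff p' A q <= payoff p A q.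
Definition BR_B (B : 'M[R]_3) (p : 'rV[R]_3) (q : 'cV[R]_3) : Prop :=
  SigmaB q /\ forall q', SigmaB q' -> payoff p B q' <= payoff p B q.

Definition nash (A B : 'M[R]_3) (p : 'rV[R]_3) (q : 'cV[R]_3) : Prop :=
  BR_A A q p /\ BR_B B p q.

Definition interior_profile (p : 'rV[R]_3) (q : 'cV[R]_3) : Prop :=
  (forall j, 0 < p 0 j) /\ (forall i, 0 < q i 0).

Definition unique_interior_nash (A B : 'M[R]_3) : Prop :=
  exists p q, nash A B p q /\ interior_profile p q /\
    forall p' q', nash A B p' q' -> p' = p /\ q' = q.

Definition trans (A B : 'M[R]_3) (c d : 'I_3 * 'I_3) : Prop :=
  (c.2 = d.2 /\ c.1 <> d.1 /\ A c.1 c.2 <= A d.1 d.2) \/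
  (c.1 = d.1 /\ c.2 <> d.2 /\ B c.1 c.2 <= B d.1 d.2).

Definition no_dominated (A B : 'M[R]_3) : Prop :=
  forall i i' i'' j j' j'' : 'I_3,
    i != i' -> i != i'' -> i' != i'' ->
    j != j' -> j != j'' -> j' != j'' ->
    (trans A B (i, j) (i', j) -> trans A B (i, j') (i', j') ->
       trans A B (i', j'') (i, j'')) /\
    (trans A B (i, j) (i, j') -> trans A B (i', j) (i', j') ->
       trans A B (i'', j') (i'', j)).

End Game.

(** A mixed best reply only uses pure strategies that are themselves best
    replies: moving the weight of a strictly worse pure strategy onto a better
    one raises the payoff.  At an interior equilibrium every pure strategy is
    used, so no row is strictly worse than another against the (fully mixed)
    column strategy.  If row [i'] weakly beats row [i] in two columns, it must
    therefore also do so in the third, since otherwise it would beat [i]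
    against every fully mixed column strategy; columns are symmetric. *)

From mathcomp Require Import all_boot all_order all_algebra.
Set Implicit Arguments. Unset Strict Implicit. Unset Printing Implicit Defensive.
Import Order.TTheory GRing.Theory Num.Theory.

Local Open Scope ring_scope.

Section Simplex.
Variables (R : realFieldType) (n : nat).
Implicit Types (x y r : 'I_n -> R).

Definition simplex x := (forall k, 0 <= x k) /\ \sum_k x k = 1.

Lemma sum_delta_diff (i i' : 'I_n) (F : 'I_n -> R) : i' != i ->
  \sum_k ((k == i')%:R - (k == i)%:R) * F k = F i' - F i.
Proof.
move=> i'i; under eq_bigr do rewrite mulrBl.
have pick1 a : \sum_k (k == a)%:R * F k = F a.
  rewrite (bigD1 a) //= eqxx mul1r big1 ?addr0 // => k /negPf->.
  by rewrite mul0r.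
by rewrite sumrB !pick1.
Qed.

Lemma simplex_shift_mass x r (i i' : 'I_n) :
  simplex x -> 0 < x i -> r i < r i' ->
  exists2 y, simplex y & \sum_k x k * r k < \sum_k y k * r k.
Proof.
move=> [x_ge0 x_sum1] x_i_gt0 r_lt.
have i'i : i' != i by apply: contraTneq r_lt => ->; rewrite ltxx.
pose d k : R := (k == i')%:R - (k == i)%:R.
exists (fun k => x k + x i * d k); first split.
- move=> k; rewrite /d; have [->|ki] := eqVneq k i.
    by rewrite eq_sym (negPf i'i) sub0r mulrN1 subrr.
  rewrite subr0; case: (k == i') => /=.
    by rewrite mulr1 addr_ge0 // ltW.
  by rewrite mulr0 addr0.
- rewrite big_split /= -mulr_sumr x_sum1.
  have := sum_delta_diff (fun _ => 1) i'i.
  by under eq_bigr do rewrite mulr1; rewrite subrr => ->; rewrite mulr0 addr0.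
- under [X in _ < X]eq_bigr do rewrite mulrDl -mulrA.
  by rewrite big_split /= -mulr_sumr sum_delta_diff // ltrDl mulr_gt0 // subr_gt0.
Qed.

Lemma simplex_argmax_support x r (i i' : 'I_n) :
  simplex x -> (forall y, simplex y -> \sum_k y k * r k <= \sum_k x k * r k) ->
  r i < r i' -> x i = 0.
Proof.
move=> x_simplex x_max r_lt; apply/eqP; rewrite eq_le x_simplex.1 andbT leNgt.
apply/negP => x_i_gt0.
have [y y_simplex] := simplex_shift_mass x_simplex x_i_gt0 r_lt.
by rewrite ltNge x_max.
Qed.

Lemma sum_mulr_lt x y (c : 'I_n -> R) (k0 : 'I_n) :
  (forall k, x k <= y k) -> x k0 < y k0 -> (forall k, 0 < c k) ->
  \sum_k c k * x k < \sum_k c k * y k.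
Proof.
move=> x_le_y x_lt_y c_gt0; rewrite -subr_gt0 -sumrB (bigD1 k0) //=.
rewrite -mulrBr ltr_wpDr ?mulr_gt0 ?subr_gt0 //.
by apply: sumr_ge0 => k _; rewrite -mulrBr mulr_ge0 ?subr_ge0 // ltW.
Qed.

End Simplex.

Lemma ord3_cover (j j' j'' k : 'I_3) : j != j' -> j != j'' -> j' != j'' ->
  [|| k == j, k == j' | k == j''].
Proof.
by case: j => [[|[|[|?]]] ?] //; case: j' => [[|[|[|?]]] ?] //;
   case: j'' => [[|[|[|?]]] ?] //; case: k => [[|[|[|?]]] ?].
Qed.

Lemma sum_mulr_lt3 (R : realFieldType) (x y c : 'I_3 -> R) (j j' j'' : 'I_3) :
  j != j' -> j != j'' -> j' != j'' -> (forall k, 0 < c k) ->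
  x j <= y j -> x j' <= y j' -> x j'' < y j'' ->
  \sum_k c k * x k < \sum_k c k * y k.
Proof.
move=> jj' jj'' j'j'' c_gt0 le_j le_j' lt_j''.
apply: (sum_mulr_lt _ lt_j'') => // k.
by case/or3P: (ord3_cover k jj' jj'' j'j'') => /eqP-> //; apply: ltW.
Qed.

Section Game.
Variable R : realFieldType.
Implicit Types (A B M : 'M[R]_3) (p : 'rV[R]_3) (q : 'cV[R]_3).

Lemma payoff_mulmxr p M q : payoff p M q = \sum_k p 0 k * (M *m q) k 0.
Proof. by rewrite /payoff -mulmxA mxE. Qed.

Lemma payoff_mulmxl p M q : payoff p M q = \sum_k q k 0 * (p *m M) 0 k.
Proof. by rewrite /payoff mxE; apply: eq_bigr => k _; rewrite mulrC. Qed.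

Lemma BR_A_support A q p (i i' : 'I_3) :
  BR_A A q p -> (A *m q) i 0 < (A *m q) i' 0 -> p 0 i = 0.
Proof.
move=> [p_simplex p_best].
apply: (simplex_argmax_support (r := fun k => (A *m q) k 0) p_simplex) => y y_simplex.
have row_simplex : SigmaA (\row_k y k).
  split=> [k|]; first by rewrite mxE; apply: y_simplex.1.
  by rewrite -y_simplex.2; apply: eq_bigr => k _; rewrite mxE.
have := p_best _ row_simplex; rewrite !payoff_mulmxr.
by under eq_bigr do rewrite mxE.
Qed.

Lemma BR_B_support B p q (j j' : 'I_3) :
  BR_B B p q -> (p *m B) 0 j < (p *m B) 0 j' -> q j 0 = 0.
Proof.
move=> [q_simplex q_best].
apply: (simplex_argmax_support (r := fun k => (p *m B) 0 k) q_simplex) => y y_simplex.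
have col_simplex : SigmaB (\col_k y k).
  split=> [k|]; first by rewrite mxE; apply: y_simplex.1.
  by rewrite -y_simplex.2; apply: eq_bigr => k _; rewrite mxE.
have := q_best _ col_simplex; rewrite !payoff_mulmxl.
by under eq_bigr do rewrite mxE.
Qed.

Lemma trans_rowE {A B} (i i' : 'I_3) {j} :
  i != i' -> trans A B (i, j) (i', j) <-> A i j <= A i' j.
Proof.
move=> ii'; split=> [[[_ []]|[/= /eqP]] //|]; first by rewrite (negPf ii').
by left; split=> //; split=> //; apply/eqP.
Qed.

Lemma trans_colE {A B} {i} (j j' : 'I_3) :
  j != j' -> trans A B (i, j) (i, j') <-> B i j <= B i j'.
Proof.
move=> jj'; split=> [[[/= /eqP]|[_ []]] //|]; first by rewrite (negPf jj').
by right; split=> //; split=> //; apply/eqP.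
Qed.

End Game.

Theorem mainTheorem2 (R : realFieldType) (A B : 'M[R]_3) :
  unique_interior_nash A B -> no_dominated A B.
Proof.
move=> [p [q [[p_best q_best] [[p_gt0 q_gt0] _]]]].
move=> i i' i'' j j' j'' ii' ii'' i'i'' jj' jj'' j'j''; split.
- move=> /(trans_rowE ii') le_j /(trans_rowE ii') le_j'.
  apply/trans_rowE; first by rewrite eq_sym.
  rewrite leNgt; apply/negP => lt_j''.
  suff : p 0 i = 0 by move/eqP; rewrite gt_eqF.
  apply: (BR_A_support (i' := i') p_best); rewrite !mxE.
  under eq_bigr do rewrite mulrC; under [X in _ < X]eq_bigr do rewrite mulrC.
  exact: sum_mulr_lt3 jj' jj'' j'j'' _ le_j le_j' lt_j''.
- move=> /(trans_colE jj') le_i /(trans_colE jj') le_i'.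
  apply/trans_colE; first by rewrite eq_sym.
  rewrite leNgt; apply/negP => lt_i''.
  suff : q j 0 = 0 by move/eqP; rewrite gt_eqF.
  apply: (BR_B_support (j' := j') q_best); rewrite !mxE.
  exact: sum_mulr_lt3 ii' ii'' i'i'' _ le_i le_i' lt_i''.
Qed.
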